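(* Let $(\gamma_{n})_{n\in\mathbb{N}}$ be nonnegative integrable functions on $[0,\infty)$ with $\rho:=\sup_{n\in\mathbb{N}}\int_{0}^{\infty}\gamma_{n}(t)dt<1$, let $a(t)>0$ with $a(t)/t\to0$, and let $G_{n}(t,\theta,M)$, $C_{n}^{1}(s,M)$, $C_{n}^{2}(s,M)$ be as defined in the context. Fix $\theta\in\mathbb{R}$ and let $k_{1}\ge\frac{1}{1-\rho}$ be a constant such that for all sufficiently large $t$, $|G_{n}(s,\frac{a(t)}{t}\theta,M)|\le k_{1}\frac{a(t)}{t}|\theta|$ uniformly in $1\le n\le M$, $M\in\mathbb{N}$, $s\ge0$. Let $$k_{2}:=\frac{4\left[\frac{\rho}{2(1-\rho)^{3}}\left[k_{1}+\frac{1}{1-\rho}\right]+\rho k_{1}^{3}\right]}{(4-\rho)(1-\rho)}.$$ Then for all sufficiently large $t$ such that $k_{1}\frac{a(t)}{t}|\theta|\le\frac{1-\rho}{4}$, $$\left|G_{n}\left(s,\tfrac{a(t)}{t}\theta,M\right)-C_{n}^{1}(s,M)\tfrac{a(t)}{t}\theta-C_{n}^{2}(s,M)\left(\tfrac{a(t)}{t}\theta\right)^{2}\right|\le k_{2}\left[\tfrac{a(t)}{t}|\theta|\right]^{3},$$ uniformly in $1\le n\le M$, $M\in\mathbb{N}$, $s\ge0$.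
   Context: For $M\in\mathbb{N}$, $\theta\in\mathbb{R}$, $t\ge0$: $G_{M}(t,\theta,M)=\theta$ and for $0\le n\le M-1$, $G_{n}(t,\theta,M)=\theta+\int_{0}^{t}(e^{G_{n+1}(t-s,\theta,M)}-1)\gamma_{n}(s)ds$. Also $C_{M}^{1}(s,M)=1$, $C_{M}^{2}(s,M)=0$, and for $1\le n<M$: $C_{n}^{1}(s,M)=1+\int_{0}^{s}C_{n+1}^{1}(s-r,M)\gamma_{n}(r)dr$, $C_{n}^{2}(s,M)=\int_{0}^{s}\left(C_{n+1}^{2}(s-r,M)+\frac12[C_{n+1}^{1}(s-r,M)]^{2}\right)\gamma_{n}(r)dr$. *)

From HB Require Import structures.
From mathcomp Require Import all_boot all_order all_algebra.
From mathcomp Require Import all_classical all_reals all_analysis.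
Set Implicit Arguments. Unset Strict Implicit. Unset Printing Implicit Defensive.
Import Order.TTheory GRing.Theory Num.Theory.
Import numFieldNormedType.Exports.
Local Open Scope classical_set_scope.
Local Open Scope ring_scope.

Section Defs.
Variable R : realType.
Variable gamma : nat -> R -> R.

Definition int0 (t : R) (f : R -> R) : R :=
  \int[(@lebesgue_measure R)]_(r in `[0, t]) f r.

(* Grec k n t th : G_n(t, th, M) where k = M - n remaining steps *)
Fixpoint Grec (k n : nat) (t th : R) : R :=
  match k with
  | 0 => th
  | k'.+1 => th + int0 t (fun s => (expR (Grec k' n.+1 (t - s) th) - 1) * gamma n s)
  end.

(* G_n(t, th, M) (meaningful for n <= M) *)
Definition G (n : nat) (t th : R) (M : nat) : R := Grec (M - n) n t th.

Fixpoint C1rec (k n : nat) (s : R) : R :=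
  match k with
  | 0 => 1
  | k'.+1 => 1 + int0 s (fun r => C1rec k' n.+1 (s - r) * gamma n r)
  end.

Fixpoint C2rec (k n : nat) (s : R) : R :=
  match k with
  | 0 => 0
  | k'.+1 => int0 s (fun r => (C2rec k' n.+1 (s - r)
                 + 2^-1 * (C1rec k' n.+1 (s - r)) ^+ 2) * gamma n r)
  end.

(* C_n^1(s, M), C_n^2(s, M) (meaningful for 1 <= n <= M) *)
Definition C1 (n : nat) (s : R) (M : nat) : R := C1rec (M - n) n s.
Definition C2 (n : nat) (s : R) (M : nat) : R := C2rec (M - n) n s.

End Defs.

From mathcomp Require Import all_boot all_order all_algebra.
From mathcomp Require Import all_classical all_reals all_analysis.
From mathcomp Require Import measurable_realfun lebesgue_integral_fubini.
From mathcomp Require Import ring lra zify.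
Set Implicit Arguments.
Unset Strict Implicit.
Import Order.TTheory GRing.Theory Num.Theory.
Import numFieldNormedType.Exports.
Local Open Scope classical_set_scope.
Local Open Scope ring_scope.

(* Write G_n = C1_n x + C2_n x^2 + e_n with x = a(t) theta / t. Unfolding one step
   of the three recursions, e_n(s) is the convolution of gamma_n with
     e_{n+1} + (exp G_{n+1} - 1 - G_{n+1} - G_{n+1}^2/2)
             + (e_{n+1} + C2_{n+1} x^2) (G_{n+1} + C1_{n+1} x) / 2.
   Convolution with gamma_n multiplies sup bounds by at most rho, so |C1| <= 1/(1-rho)
   and |C2| <= rho/(2(1-rho)^3), the fixed points of the corresponding recursive bounds.
   With |exp y - 1 - y - y^2/2| <= |y|^3 for |y| <= 1 and |G| <= k1 |x|, the bound
   |e| <= k2 |x|^3 is reproduced by the convolution step as soon as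
   k1 |x| <= (1-rho)/4; it thus propagates down from n = M, where e = 0. *)

Section TaylorEstimates.
Variable R : realType.

Lemma expn2_leq_fact m : (2 ^ m.+1 <= m.+3`!)%N.
Proof. by elim: m => [//|m IH]; rewrite factS expnS leq_mul. Qed.

Lemma series_exp_coeff_taylor2 (x : R) m : `|x| <= 1 ->
  `|series (exp_coeff x) m.+3 - (1 + x + x ^+ 2 / 2)| <= `|x| ^+ 3 * (1 - 2^-1 ^+ m).
Proof.
move=> x1; elim: m => [|m IH].
  rewrite expr0 subrr mulr0 normr_le0 subr_eq0.
  rewrite /series /= !big_nat_recr //= big_nil /exp_coeff /= add0r.
  by rewrite !expr0 expr1 !divr1.
rewrite seriesSr addrAC; apply: le_trans (ler_normD _ _) _.
apply: le_trans (lerD IH (lexx _)) _.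
rewrite /exp_coeff /= normrM normrX normfV normr_nat.
have fact_inv : ((m.+3)`!%:R : R)^-1 <= 2^-1 ^+ m.+1.
  rewrite exprVn lef_pV2 ?posrE ?exprn_gt0 ?ltr0n ?fact_gt0 //.
  by rewrite -natrX ler_nat expn2_leq_fact.
have pow_le : `|x| ^+ m.+3 <= `|x| ^+ 3.
  by rewrite -addn3 exprD ler_piMl ?exprn_ge0 ?exprn_ile1.
have inv_ge0 : 0 <= ((m.+3)`!%:R : R)^-1 by rewrite invr_ge0 ler0n.
have := ler_pM (exprn_ge0 _ (normr_ge0 x)) inv_ge0 pow_le fact_inv.
set a := `|x| ^+ 3; rewrite [2^-1 ^+ m.+1]exprS; set h := 2^-1 ^+ m; lra.
Qed.

Lemma expR_taylor2 (x : R) : `|x| <= 1 -> `|expR x - 1 - x - x ^+ 2 / 2| <= `|x| ^+ 3.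
Proof.
move=> x1.
have partial_sum N : (3 <= N)%N ->
    `|series (exp_coeff x) N - (1 + x + x ^+ 2 / 2)| <= `|x| ^+ 3.
  case: N => [|[|[|m]]] // _.
  apply: le_trans (series_exp_coeff_taylor2 m x1) _.
  by rewrite ler_piMr ?exprn_ge0 // lerBlDr lerDl exprn_ge0.
have -> : expR x - 1 - x - x ^+ 2 / 2 = expR x - (1 + x + x ^+ 2 / 2) by ring.
rewrite ler_norml; apply/andP; split.
- rewrite lerBrDr; apply: limr_ge; first exact: is_cvg_series_exp_coeff.
  exists 3%N => // N /= /partial_sum; rewrite ler_norml => /andP[+ _]; lra.
- rewrite lerBlDr; apply: limr_le; first exact: is_cvg_series_exp_coeff.
  exists 3%N => // N /= /partial_sum; rewrite ler_norml => /andP[_ +]; lra.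
Qed.

Lemma expR_quadratic_approx (y c d x e K c' d' : R) :
  `|y - c * x - d * x ^+ 2| <= e -> `|y| <= K -> K <= 1 -> `|c| <= c' -> `|d| <= d' ->
  `|expR y - 1 - x * c - x ^+ 2 * (d + 2^-1 * c ^+ 2)| <=
     e + K ^+ 3 + (e + d' * `|x| ^+ 2) * (K + c' * `|x|) / 2.
Proof.
move=> ye yK K1 cc' dd'.
set r := y - c * x - d * x ^+ 2.
have -> : expR y - 1 - x * c - x ^+ 2 * (d + 2^-1 * c ^+ 2) =
   r + (expR y - 1 - y - y ^+ 2 / 2) + (r + d * x ^+ 2) * (y + c * x) / 2.
  by rewrite /r; field.
apply: le_trans (ler_normD _ _) _; apply: lerD.
  apply: le_trans (ler_normD _ _) _; apply: lerD => //.
  apply: le_trans (expR_taylor2 (le_trans yK K1)) _.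
  by rewrite lerXn2r ?nnegrE ?(le_trans _ yK).
rewrite normrM normfV (ger0_norm (ler0n _ 2)) ler_pM2r ?invr_gt0 ?ltr0n //.
rewrite normrM; apply: ler_pM => //.
- apply: le_trans (ler_normD _ _) _; apply: lerD => //.
  by rewrite normrM normrX ler_wpM2r ?exprn_ge0.
- apply: le_trans (ler_normD _ _) _; apply: lerD => //.
  by rewrite normrM ler_wpM2r.
Qed.

Lemma norm_add_half_sqr_le (a b A B : R) : `|a| <= A -> `|b| <= B ->
  `|a + 2^-1 * b ^+ 2| <= A + 2^-1 * B ^+ 2.
Proof.
move=> aA bB; apply: le_trans (ler_normD _ _) _; rewrite lerD //.
rewrite normrM normrX ger0_norm ?invr_ge0 // ler_wpM2l ?invr_ge0 //.
by rewrite lerXn2r ?nnegrE ?(le_trans _ bB).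
Qed.

Definition k2 (rho c1 c2 k1 : R) :=
  4 * (c2 * (k1 + c1) + rho * k1 ^+ 3) / ((4 - rho) * (1 - rho)).

Lemma k2_ge0 (rho c1 c2 k1 : R) :
  0 <= rho -> rho < 1 -> 0 <= c1 -> 0 <= k1 -> 0 <= c2 -> 0 <= k2 rho c1 c2 k1.
Proof.
move=> rho0 rho1 c1_ge0 k1_ge0 c2_ge0.
have num_ge0 : 0 <= c2 * (k1 + c1) + rho * k1 ^+ 3.
  by rewrite addr_ge0 ?mulr_ge0 ?addr_ge0 ?exprn_ge0.
rewrite /k2 divr_ge0 ?mulr_ge0 //; lra.
Qed.

Lemma k2_error_stable (rho c1 c2 k1 u : R) :
  0 <= rho -> rho < 1 -> 0 <= c1 -> c1 <= k1 -> 0 <= c2 -> 0 <= u ->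
  k1 * u <= (1 - rho) / 4 ->
  let E := k2 rho c1 c2 k1 * u ^+ 3 in
  rho * (E + (k1 * u) ^+ 3 + (E + c2 * u ^+ 2) * (k1 * u + c1 * u) / 2) <= E.
Proof.
move=> rho0 rho1 c1_ge0 c1k1 c2_ge0 u_ge0 k1u.
have k1_ge0 : 0 <= k1 by apply: le_trans c1k1.
have E3_ge0 : 0 <= k2 rho c1 c2 k1 * u ^+ 3 by rewrite mulr_ge0 ?k2_ge0 ?exprn_ge0.
rewrite /k2 in E3_ge0 *.
set E := (X in X * u ^+ 3); set E3 := E * u ^+ 3.
have den_gt0 : 0 < (4 - rho) * (1 - rho) by apply: mulr_gt0; lra.
have E3_den : E3 * ((4 - rho) * (1 - rho)) = 4 * (c2 * (k1 + c1) + rho * k1 ^+ 3) * u ^+ 3.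
  by rewrite /E3 /E; field; apply/andP; split; rewrite gt_eqF //; lra.
have sum_le : k1 * u + c1 * u <= (1 - rho) / 2.
  have : c1 * u <= k1 * u by rewrite ler_wpM2r.
  lra.
have rhoE3_le : rho * E3 * (k1 * u + c1 * u) <= rho * E3 * ((1 - rho) / 2).
  by rewrite ler_wpM2l // mulr_ge0.
have P_ge0 : 0 <= c2 * (k1 + c1) * u ^+ 3 by rewrite !mulr_ge0 ?exprn_ge0 ?addr_ge0.
have rhoP_le : rho * (c2 * (k1 + c1) * u ^+ 3) <= c2 * (k1 + c1) * u ^+ 3.
  by rewrite ler_piMl //; lra.
move: E3_den rhoE3_le rhoP_le; rewrite !exprS !expr0; lra.
Qed.

End TaylorEstimates.

Lemma measurable_fun_integrable d (T : measurableType d) (R : realType)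
    (mu : {measure set T -> \bar R}) (D : set T) (f : T -> R) :
  mu.-integrable D (EFin \o f) -> measurable_fun D f.
Proof. by move=> /measurable_int /measurable_EFinP. Qed.

Lemma measurable_expR_sub1 (R : realType) (f : R -> R) :
  measurable_fun setT f -> measurable_fun setT (fun y => expR (f y) - 1).
Proof.
move=> mf; apply: measurable_funB (measurable_cst (1 : R)).
exact: measurableT_comp (@measurable_expR R) mf.
Qed.

Section Convolution.
Variable R : realType.
Notation mu := (@lebesgue_measure R).
Variable g : R -> R.

(* Up to conversion, the recursions of [Grec], [C1rec] and [C2rec] are convolutions
   with [gamma n]. *)
Definition conv (f : R -> R) (s : R) : R := int0 s (fun r => f (s - r) * g r).

Lemma measurable_conv f : measurable_fun (`[0, +oo[ : set R) g -> measurable_fun setT f ->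
  measurable_fun setT (conv f).
Proof.
move=> mg mf.
have mB : measurable_fun setT (fun z : R * R => z.1 - z.2).
  exact: measurable_funB measurable_fst measurable_snd.
(* [conv f s] is the integral of the section [F (s, _)]: apply Fubini-Tonelli. *)
pose F (z : R * R) := (f (z.1 - z.2) * (g \_ `[0, +oo[) z.2 * \1_`[0, +oo[ (z.1 - z.2))%:E.
have mF : measurable_fun setT F.
  apply/measurable_EFinP; apply: measurable_funM; first apply: measurable_funM.
  - exact: measurableT_comp mf mB.
  - by apply: measurableT_comp measurable_snd; apply/measurable_restrict => //; rewrite setTI.
  - exact: measurableT_comp (measurable_indic _) mB.
have convE s : conv f s = fine (fubini_F mu F^\+ s - fubini_F mu F^\- s)%E.
  rewrite /conv /int0 /Rintegral integral_mkcond (_ : (_ \_ _) = (fun y => F (s, y))).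
    by rewrite integralE /fubini_F; congr (fine (_ - _)); apply: eq_integral => y _;
      rewrite ?funeposE ?funenegE.
  apply/funext => r; rewrite /F /patch /= !mem_setE !in_itv /= !andbT.
  have [r0|r0] /= := boolP (0 <= r); last by rewrite mulr0 mul0r.
  by rewrite /indic mem_setE in_itv /= andbT subr_ge0; case: (r <= s); rewrite ?mulr1 ?mulr0.
rewrite (_ : conv f = fine \o (fun s => fubini_F mu F^\+ s - fubini_F mu F^\- s)%E).
  apply: measurableT_comp => //; apply: emeasurable_funB;
    apply: measurable_fun_fubini_tonelli_F => //.
  - exact: measurable_funepos.
  - exact: measurable_funeneg.
by apply/funext => s; rewrite convE.
Qed.

Variable rho : R.
Hypothesis g_ge0 : forall t, 0 <= t -> 0 <= g t.
Hypothesis g_integrable : mu.-integrable `[0, +oo[ (fun t => (g t)%:E).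
Hypothesis g_int_le : \int[mu]_(t in `[0, +oo[) g t <= rho.

Let itv0_sub (s : R) : `[0, s] `<=` `[0, +oo[.
Proof. exact: subset_itvl. Qed.

Lemma integrable_itv0 (s : R) : mu.-integrable `[0, s] (fun t => (g t)%:E).
Proof. exact: integrableS g_integrable. Qed.

Lemma Rintegral_itv0_le (s : R) : \int[mu]_(t in `[0, s]) g t <= rho.
Proof.
apply: le_trans g_int_le; apply: fine_le.
- exact: integrable_fin_num (integrable_itv0 s).
- exact: integrable_fin_num g_integrable.
- apply: ge0_subset_integral => //; first by case/integrableP: g_integrable.
  by move=> x /=; rewrite in_itv /= andbT lee_fin => /g_ge0.
Qed.

Lemma integrable_conv {f : R -> R} {s B : R} : measurable_fun setT f ->
  (forall y, 0 <= y <= s -> `|f y| <= B) ->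
  mu.-integrable `[0, s] (EFin \o (fun r => f (s - r) * g r)).
Proof.
move=> mf fB.
apply: (@le_integrable _ _ _ mu _ (measurable_itv _) _ (fun r => (B * g r)%:E)).
- apply/measurable_EFinP; apply: measurable_funM.
    have ms : measurable_fun setT (fun r : R => f (s - r)).
      apply: measurableT_comp mf _.
      exact: measurable_funB (measurable_cst s) (@measurable_id _ _ setT).
    exact: measurable_funS ms.
  exact: measurable_funS (measurable_fun_integrable g_integrable).
- move=> r; rewrite /= in_itv /= => /andP[r0 rs].
  rewrite lee_fin normrM (ger0_norm (g_ge0 r0)); apply: le_trans (ler_norm _).
  by rewrite ler_wpM2r ?g_ge0 // fB // subr_ge0 rs /= lerBlDr lerDl.
- by apply: eq_integrable (integrableZl _ B (integrable_itv0 s)).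
Qed.

Lemma norm_conv_le (f : R -> R) (s B : R) : measurable_fun setT f ->
  (forall y, 0 <= y <= s -> `|f y| <= B) -> 0 <= s -> `|conv f s| <= B * rho.
Proof.
move=> mf fB s0.
have B_ge0 : 0 <= B by apply: le_trans (fB 0 _); rewrite ?lexx.
have normfB y : 0 <= y <= s -> `| `|f y| | <= B by rewrite normr_id; exact: fB.
have mnf : measurable_fun setT (fun y => `|f y|) by exact: measurableT_comp.
have cstB y : 0 <= y <= s -> `|(fun=> B) y| <= `|B| by [].
rewrite /conv /int0.
apply: le_trans (le_normr_Rintegral _ (integrable_conv mf fB)) _ => //.
rewrite (@eq_Rintegral _ _ _ mu _ (fun r => `|f (s - r)| * g r)); last first.
  by move=> r; rewrite inE /= in_itv /= => /andP[r0 _]; rewrite normrM (ger0_norm (g_ge0 r0)).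
apply: le_trans (_ : _ <= \int[mu]_(r in `[0, s]) (B * g r)) _.
  apply: le_Rintegral => //.
  - exact: integrable_conv mnf normfB.
  - exact: (@integrable_conv (fun=> B) _ _ (measurable_cst B) cstB).
  - move=> r; rewrite /= in_itv /= => /andP[r0 rs].
    by rewrite ler_wpM2r ?g_ge0 // fB // subr_ge0 rs /= lerBlDr lerDl.
by rewrite RintegralZl ?ler_wpM2l ?Rintegral_itv0_le // integrable_itv0.
Qed.

Definition bounded_on (s : R) (f : R -> R) :=
  exists B, forall y, 0 <= y <= s -> `|f y| <= B.

Lemma bounded_onBZ (s a : R) (f h : R -> R) : bounded_on s f -> bounded_on s h ->
  bounded_on s (fun y => f y - a * h y).
Proof.
move=> [Bf fB] [Bh hB]; exists (Bf + `|a| * Bh) => y ys.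
by apply: le_trans (ler_normB _ _) _; rewrite normrM lerD ?fB ?ler_wpM2l ?hB.
Qed.

Lemma bounded_on_expR_sub1 (s : R) (f : R -> R) : bounded_on s f ->
  bounded_on s (fun y => expR (f y) - 1).
Proof.
move=> [B fB]; exists (expR B + 1) => y ys.
apply: le_trans (ler_normB _ _) _; rewrite normr1 gtr0_norm ?expR_gt0 // lerD2r.
by rewrite ler_expR (le_trans (ler_norm _)) ?fB.
Qed.

Lemma convBZ (f h : R -> R) (a s : R) : measurable_fun setT f -> measurable_fun setT h ->
  bounded_on s f -> bounded_on s h ->
  conv (fun y => f y - a * h y) s = conv f s - a * conv h s.
Proof.
move=> mf mh [Bf fB] [Bh hB].
have mah : measurable_fun setT (fun y => a * h y) by exact: measurable_funM.
have ahB y : 0 <= y <= s -> `|a * h y| <= `|a| * Bh.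
  by move=> /hB; rewrite normrM; exact: ler_wpM2l.
rewrite /conv /int0 -RintegralZl //; last exact: integrable_conv mh hB.
have -> : \int[mu]_(r in `[0, s]) (a * (h (s - r) * g r)) =
          \int[mu]_(r in `[0, s]) (a * h (s - r) * g r).
  by apply: eq_Rintegral => r _; rewrite mulrA.
rewrite -RintegralB //; [|exact: integrable_conv mf fB|exact: integrable_conv mah ahB].
by apply: eq_Rintegral => r _; ring.
Qed.

End Convolution.

Section Coefficients.
Variable R : realType.
Notation mu := (@lebesgue_measure R).
Variables (gamma : nat -> R -> R) (rho : R).
Hypothesis gamma_ge0 : forall n t, 0 <= t -> 0 <= gamma n t.
Hypothesis gamma_integrable :
  forall n, mu.-integrable `[0, +oo[ (fun t => (gamma n t)%:E).
Hypothesis gamma_int_le : forall n, \int[mu]_(t in `[0, +oo[) gamma n t <= rho.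
Hypothesis rho_lt1 : rho < 1.

Let measurable_gamma n := measurable_fun_integrable (gamma_integrable n).
Let norm_conv_gamma_le n := norm_conv_le (gamma_ge0 n) (gamma_integrable n) (gamma_int_le n).
Let convBZ_gamma n := convBZ (gamma_ge0 n) (gamma_integrable n).

Lemma measurable_Grec k n x : measurable_fun setT (fun t => Grec gamma k n t x).
Proof.
elim: k n => [|k IH] n /=; first exact: measurable_cst.
apply: measurable_funD => //.
exact: (measurable_conv (f := fun y => expR (Grec gamma k n.+1 y x) - 1)
  (measurable_gamma n) (measurable_expR_sub1 (IH n.+1))).
Qed.

Lemma measurable_C1rec k n : measurable_fun setT (C1rec gamma k n).
Proof.
elim: k n => [|k IH] n /=; first exact: measurable_cst.
exact: measurable_funD (measurable_conv (measurable_gamma n) (IH n.+1)).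
Qed.

Lemma measurable_C2rec_sqrC1rec k n :
  measurable_fun setT (fun y => C2rec gamma k n y + 2^-1 * C1rec gamma k n y ^+ 2).
Proof.
apply: measurable_funD; last first.
  exact: measurable_funM (measurable_cst _) (measurable_funX 2 (measurable_C1rec k n)).
elim: k n => [|k IH] n /=; first exact: measurable_cst.
apply: (measurable_conv
  (f := fun y => C2rec gamma k n.+1 y + 2^-1 * C1rec gamma k n.+1 y ^+ 2) (measurable_gamma n)).
exact: measurable_funD (IH n.+1) (measurable_funM (measurable_cst _)
  (measurable_funX 2 (measurable_C1rec k n.+1))).
Qed.

Lemma bounded_on_Grec k n x s : bounded_on s (fun y => Grec gamma k n y x).
Proof.
elim: k n => [|k IH] n; first by exists `|x|.
have [B GB] := bounded_on_expR_sub1 (IH n.+1).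
exists (`|x| + B * rho) => y /andP[y0 ys].
apply: le_trans (ler_normD _ _) _; rewrite lerD2l.
apply: norm_conv_gamma_le (measurable_expR_sub1 (measurable_Grec k n.+1 x)) _ y0.
by move=> z /andP[z0 zy]; rewrite GB // z0 (le_trans zy ys).
Qed.

Lemma rho_ge0 : 0 <= rho.
Proof.
apply: le_trans (gamma_int_le 0); apply: Rintegral_ge0 => t.
by rewrite /= in_itv /= andbT; exact: gamma_ge0.
Qed.

Definition c1 := (1 - rho)^-1.
Definition c2 := rho / (2 * (1 - rho) ^+ 3).

Lemma c1_fixpoint : 1 + c1 * rho = c1.
Proof. by rewrite /c1; field; rewrite subr_eq0 gt_eqF. Qed.

Lemma c2_fixpoint : (c2 + 2^-1 * c1 ^+ 2) * rho = c2.
Proof. by rewrite /c1 /c2; field; rewrite subr_eq0 gt_eqF. Qed.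

Lemma c1_ge1 : 1 <= c1.
Proof. by rewrite -c1_fixpoint lerDl mulr_ge0 ?rho_ge0 // invr_ge0 subr_ge0 ltW. Qed.

Lemma c2_ge0 : 0 <= c2.
Proof. by rewrite divr_ge0 ?rho_ge0 // mulr_ge0 // exprn_ge0 // subr_ge0 ltW. Qed.

Lemma norm_C1rec_le k n s : 0 <= s -> `|C1rec gamma k n s| <= c1.
Proof.
elim: k n s => [|k IH] n s s0 /=; first by rewrite normr1 c1_ge1.
rewrite -c1_fixpoint; apply: le_trans (ler_normD _ _) _; rewrite normr1 lerD2l.
by apply: norm_conv_gamma_le (measurable_C1rec k n.+1) _ s0 => y /andP[y0 _]; exact: IH.
Qed.

Lemma norm_C2rec_le k n s : 0 <= s -> `|C2rec gamma k n s| <= c2.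
Proof.
elim: k n s => [|k IH] n s s0 /=; first by rewrite normr0 c2_ge0.
rewrite -c2_fixpoint; apply: norm_conv_gamma_le (measurable_C2rec_sqrC1rec k n.+1) _ s0.
by move=> y /andP[y0 _]; rewrite norm_add_half_sqr_le ?IH ?norm_C1rec_le.
Qed.

Lemma Grec_taylor2_errorS k n x s :
  Grec gamma k.+1 n s x - C1rec gamma k.+1 n s * x - C2rec gamma k.+1 n s * x ^+ 2 =
  conv (gamma n) (fun y => expR (Grec gamma k n.+1 y x) - 1 - x * C1rec gamma k n.+1 y
    - x ^+ 2 * (C2rec gamma k n.+1 y + 2^-1 * C1rec gamma k n.+1 y ^+ 2)) s.
Proof.
pose fG y := expR (Grec gamma k n.+1 y x) - 1.
pose fC := C1rec gamma k n.+1.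
pose fD y := C2rec gamma k n.+1 y + 2^-1 * fC y ^+ 2.
have mG : measurable_fun setT fG := measurable_expR_sub1 (measurable_Grec k n.+1 x).
have bG : bounded_on s fG := bounded_on_expR_sub1 (bounded_on_Grec k n.+1 x s).
have bC : bounded_on s fC by exists c1 => y /andP[y0 _]; exact: norm_C1rec_le.
have bD : bounded_on s fD.
  exists (c2 + 2^-1 * c1 ^+ 2) => y /andP[y0 _].
  by rewrite norm_add_half_sqr_le ?norm_C1rec_le ?norm_C2rec_le.
rewrite (convBZ_gamma _ _ (measurable_funB mG (measurable_funM (measurable_cst x)
  (measurable_C1rec k n.+1))) (measurable_C2rec_sqrC1rec k n.+1) (bounded_onBZ _ bG bC) bD).
rewrite (convBZ_gamma _ _ mG (measurable_C1rec k n.+1) bG bC).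
rewrite -[Grec _ _ _ _ _]/(x + conv (gamma n) fG s).
rewrite -[C1rec _ _ _ _]/(1 + conv (gamma n) fC s) -[C2rec _ _ _ _]/(conv (gamma n) fD s).
ring.
Qed.

Lemma Grec_taylor2_error_le (x k1 : R) (M : nat) :
  k1 * `|x| <= (1 - rho) / 4 -> c1 <= k1 ->
  (forall n s, (1 <= n <= M)%N -> 0 <= s -> `|G gamma n s x M| <= k1 * `|x|) ->
  forall k n s, (n + k = M)%N -> (1 <= n)%N -> 0 <= s ->
  `|Grec gamma k n s x - C1rec gamma k n s * x - C2rec gamma k n s * x ^+ 2| <=
   k2 rho c1 c2 k1 * `|x| ^+ 3.
Proof.
move=> k1x c1k1 G_le.
have c1_ge0 : 0 <= c1 := le_trans ler01 c1_ge1.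
have k1x_le1 : k1 * `|x| <= 1 by have := rho_ge0; lra.
elim=> [|k IH] n s nkM n_ge1 s0.
  rewrite /= mul1r mul0r !subrr normr0 mulr_ge0 ?exprn_ge0 // k2_ge0 ?rho_ge0 ?c2_ge0 //.
  exact: le_trans c1k1.
have G_next y : 0 <= y -> `|Grec gamma k n.+1 y x| <= k1 * `|x|.
  move=> y0; have := G_le n.+1 y _ y0; rewrite /G (_ : (M - n.+1 = k)%N); last by lia.
  by apply; apply/andP; split; lia.
rewrite Grec_taylor2_errorS; apply: le_trans (norm_conv_gamma_le _ _ _ s0) _.
- apply: measurable_funB (measurable_funM (measurable_cst _) (measurable_C2rec_sqrC1rec _ _)).
  apply: measurable_funB (measurable_funM (measurable_cst x) (measurable_C1rec _ _)).
  exact: measurable_expR_sub1 (measurable_Grec _ _ _).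
- move=> y /andP[y0 _].
  apply: expR_quadratic_approx (IH _ _ _ _ y0) (G_next _ y0) k1x_le1
    (norm_C1rec_le _ _ y0) (norm_C2rec_le _ _ y0) => //.
  by rewrite addSnnS.
- by rewrite mulrC; apply: k2_error_stable; rewrite ?rho_ge0 ?c2_ge0.
Qed.

End Coefficients.

Theorem lemma4p9 (R : realType) (gamma : nat -> R -> R) (rho : R)
  (a : R -> R) (theta k1 : R) :
  (forall n t, 0 <= t -> 0 <= gamma n t) ->
  (forall n, (@lebesgue_measure R).-integrable `[0, +oo[
                (fun t => (gamma n t)%:E)) ->
  (* rho = sup_n int_0^oo gamma_n *)
  (forall n, \int[(@lebesgue_measure R)]_(t in `[0, +oo[) gamma n t <= rho) ->
  (forall r, (forall n, \int[(@lebesgue_measure R)]_(t in `[0, +oo[) gamma n t <= r) ->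
     rho <= r) ->
  rho < 1 ->
  (forall t, 0 < t -> 0 < a t) ->
  (fun t => a t / t) @ +oo --> (0 : R) ->
  (1 - rho)^-1 <= k1 ->
  (\forall t \near +oo, forall (M n : nat) (s : R), (1 <= n <= M)%N -> 0 <= s ->
      `|G gamma n s (a t / t * theta) M| <= k1 * (a t / t) * `|theta|) ->
  let k2 := 4 * (rho / (2 * (1 - rho) ^+ 3) * (k1 + (1 - rho)^-1) + rho * k1 ^+ 3)
            / ((4 - rho) * (1 - rho)) in
  \forall t \near +oo, k1 * (a t / t) * `|theta| <= (1 - rho) / 4 ->
    forall (M n : nat) (s : R), (1 <= n <= M)%N -> 0 <= s ->
      `|G gamma n s (a t / t * theta) M - C1 gamma n s M * (a t / t * theta)
         - C2 gamma n s M * (a t / t * theta) ^+ 2|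
      <= k2 * (a t / t * `|theta|) ^+ 3.
Proof.
move=> gamma_ge0 gamma_int gamma_le _ rho_lt1 a_gt0 _ c1k1 G_near k2.
have t_gt0 : \forall t \near +oo, (0 : R) < t by exact: nbhs_pinfty_gt.
apply: filterS2 t_gt0 G_near => t t0 G_le k1x M n s /andP[n_ge1 nM] s0.
set x := a t / t * theta.
have x_norm : `|x| = a t / t * `|theta| by rewrite normrM gtr0_norm ?divr_gt0 ?a_gt0.
rewrite -mulrA -x_norm in k1x G_le; rewrite -x_norm.
exact (Grec_taylor2_error_le gamma_ge0 gamma_int gamma_le rho_lt1 k1x c1k1 (G_le M) (subnKC nM) n_ge1 s0).
Qed.
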